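(* Fix an integer $\Delta\geq 3$. There is a function $\varepsilon:\mathbb{N}\to\mathbb{R}$, depending only on $n$ (for the fixed $\Delta$), with $\varepsilon(n)\to 0$ as $n\to\infty$, such that for every integer $n\geq 2$ and every rooted tree $T$ of order $n$ and maximum degree at most $\Delta$, $$\sum_{u\in V(T)}\min\left\{d(u),n^{\downarrow}(u)\right\}\geq (1-\varepsilon(n))\frac{\Delta-2}{(\Delta-1)^2}\,n\log_{(\Delta-1)}\left(\log_{(\Delta-1)}(n)\right).$$
   Context: For a vertex $u$ of a rooted tree $T$, $d(u)$ denotes the depth of $u$ (its distance to the root) and $n^{\downarrow}(u)$ denotes the number of vertices of $T$ that are equal to $u$ or are descendants of $u$. The $o(1)$ term of the paper is written here as $\varepsilon(n)$. *)

From Stdlib Require Import Reals Lra Lia List Arith.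
Import ListNotations.

(* A rooted tree: a root together with the (finite) list of subtrees rooted
   at its children.  The order of children is irrelevant for everything below. *)
Inductive rtree : Type := Node : list rtree -> rtree.

Definition children (t : rtree) : list rtree := match t with Node ts => ts end.

(* order = number of vertices; for the subtree rooted at u this is n^down(u) *)
Fixpoint tsize (t : rtree) : nat :=
  match t with
  | Node ts => S ((fix sz (l : list rtree) : nat :=
                     match l with nil => 0 | c :: l' => tsize c + sz l' end) ts)
  end.

Fixpoint all_children_le (k : nat) (t : rtree) : Prop :=
  match t with
  | Node ts => (length ts <= k)%nat /\
      (fix al (l : list rtree) : Prop :=
         match l with nil => True | c :: l' => all_children_le k c /\ al l' end) ts
  end.

(* Maximum degree at most D: the root has degree = #children <= D, every
   non-root vertex has degree = #children + 1 <= D. *)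
Definition max_deg_le (D : nat) (t : rtree) : Prop :=
  (length (children t) <= D)%nat /\
  Forall (all_children_le (D - 1)) (children t).

(* sum over vertices u of the subtree t (whose root has depth d) of
   min { depth(u), n^down(u) } *)
Fixpoint cost_from (d : nat) (t : rtree) : nat :=
  match t with
  | Node ts => Nat.min d (tsize t) +
      (fix cs (l : list rtree) : nat :=
         match l with nil => 0 | c :: l' => cost_from (S d) c + cs l' end) ts
  end.

Definition min_depth_size_sum (t : rtree) : nat := cost_from 0 t.

Definition logb (b x : R) : R := ln x / ln b.

From Stdlib Require Import Reals Lra Lia List Arith.

(* Since min(d, s) counts the j >= 1 with j <= d and j <= s, the sum is at least
   sum_{j <= J} #{u : d(u) >= j and n_down(u) >= j}.  If non-root vertices have at
   most m = Delta - 1 children, at least about n / (m j) vertices have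
   n_down(u) >= j, while fewer than (m + 2)^j vertices have depth below j.
   Taking (m + 2)^(J+1) <= n < (m + 2)^(J+2) and summing gives at least
   (n / m) H_J - 3 n >= (n / m) ln ln n - O(n).  As ln m > 1 - 1/m, the constant
   1/m beats (m - 1) / (m^2 ln m), the stated constant in natural logarithms, so
   eps(n) can be taken 0 for all large n (and 1 below that). *)

Section NestedInduction.
Variable P : rtree -> Prop.
Hypothesis IH : forall ts, (forall c, In c ts -> P c) -> P (Node ts).

Fixpoint rtree_nested_ind (t : rtree) : P t :=
  match t with
  | Node ts => IH ts (proj1 (Forall_forall P ts)
      ((fix go (l : list rtree) : Forall P l :=
          match l with
          | nil => Forall_nil P
          | c :: l' => Forall_cons c (rtree_nested_ind c) (go l')
          end) ts))
  end.
End NestedInduction.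

Lemma list_sum_map_le {A} (g h : A -> nat) l :
  (forall x, In x l -> g x <= h x) -> list_sum (map g l) <= list_sum (map h l).
Proof.
  induction l as [|a l IHl]; simpl; intros H; [lia|].
  specialize (IHl (fun x Hx => H x (or_intror Hx))).
  specialize (H a (or_introl eq_refl)). lia.
Qed.

Lemma list_sum_map_add {A} (g h : A -> nat) l :
  list_sum (map (fun x => g x + h x) l) = list_sum (map g l) + list_sum (map h l).
Proof. induction l; simpl; lia. Qed.

Lemma list_sum_map_le_affine {A} (g h : A -> nat) a b l :
  (forall x, In x l -> g x <= a + b * h x) ->
  list_sum (map g l) <= length l * a + b * list_sum (map h l).
Proof.
  intros H. eapply Nat.le_trans; [exact (list_sum_map_le _ _ l H)|].
  clear H. induction l; simpl; nia.
Qed.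

Lemma list_sum_map_le_const {A} (g : A -> nat) a l :
  (forall x, In x l -> g x <= a) -> list_sum (map g l) <= length l * a.
Proof.
  intros H. eapply Nat.le_trans; [exact (list_sum_map_le g (fun _ => a) l H)|].
  clear H. induction l; simpl; lia.
Qed.

Lemma tsize_Node ts : tsize (Node ts) = S (list_sum (map tsize ts)).
Proof. simpl. f_equal. induction ts as [|c ts IHts]; simpl; congruence. Qed.

Lemma cost_from_Node d ts : cost_from d (Node ts) =
  Nat.min d (tsize (Node ts)) + list_sum (map (cost_from (S d)) ts).
Proof. cbn [cost_from]. f_equal. induction ts as [|c ts IHts]; simpl; congruence. Qed.

Lemma all_children_le_Node k ts : all_children_le k (Node ts) <->
  length ts <= k /\ (forall c, In c ts -> all_children_le k c).
Proof.
  cbn [all_children_le]. rewrite <- Forall_forall.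
  enough (E : (fix al (l : list rtree) : Prop :=
                 match l with nil => True | c :: l' => all_children_le k c /\ al l' end) ts
              <-> Forall (all_children_le k) ts) by (rewrite E; reflexivity).
  induction ts as [|c ts IHts]; [split; auto|].
  rewrite Forall_cons_iff, IHts. reflexivity.
Qed.

Lemma all_children_le_mono k k' t :
  k <= k' -> all_children_le k t -> all_children_le k' t.
Proof.
  intros Hk. induction t as [ts IH] using rtree_nested_ind.
  rewrite !all_children_le_Node. intros [Hlen Hc]. split; [lia|eauto].
Qed.

Lemma max_deg_le_all_children_le D t : max_deg_le D t -> all_children_le D t.
Proof.
  destruct t as [ts]. intros [Hlen Hc]. apply all_children_le_Node.
  rewrite Forall_forall in Hc. split; [exact Hlen|].
  intros c Hin. apply (all_children_le_mono (D - 1)); auto; lia.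
Qed.

Fixpoint vertex_sum (f : nat -> nat -> nat) (d : nat) (t : rtree) : nat :=
  match t with Node ts => f d (tsize t) + list_sum (map (vertex_sum f (S d)) ts) end.

Lemma vertex_sum_Node f d ts : vertex_sum f d (Node ts) =
  f d (tsize (Node ts)) + list_sum (map (vertex_sum f (S d)) ts).
Proof. reflexivity. Qed.

Lemma vertex_sum_le f g t d :
  (forall d s, f d s <= g d s) -> vertex_sum f d t <= vertex_sum g d t.
Proof.
  intros Hfg. revert d. induction t as [ts IH] using rtree_nested_ind. intros d.
  rewrite !vertex_sum_Node. apply Nat.add_le_mono; [apply Hfg|].
  apply list_sum_map_le. auto.
Qed.

Lemma vertex_sum_ext f g t d :
  (forall d s, f d s = g d s) -> vertex_sum f d t = vertex_sum g d t.
Proof. intros Hfg. apply Nat.le_antisymm; apply vertex_sum_le; intros; rewrite Hfg; lia. Qed.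

Lemma vertex_sum_add f g t d :
  vertex_sum (fun d s => f d s + g d s) d t = vertex_sum f d t + vertex_sum g d t.
Proof.
  revert d. induction t as [ts IH] using rtree_nested_ind. intros d.
  rewrite !vertex_sum_Node.
  erewrite map_ext_in by (intros c Hc; exact (IH c Hc (S d))).
  rewrite list_sum_map_add. lia.
Qed.

Lemma cost_from_vertex_sum d t : cost_from d t = vertex_sum Nat.min d t.
Proof.
  revert d. induction t as [ts IH] using rtree_nested_ind. intros d.
  rewrite cost_from_Node, vertex_sum_Node. f_equal. f_equal. apply map_ext_in. auto.
Qed.

Definition heavy_count j := vertex_sum (fun _ s => Nat.b2n (j <=? s)).
Definition shallow_count j := vertex_sum (fun d _ => Nat.b2n (d <? j)).
Definition deep_heavy_count j := vertex_sum (fun d s => Nat.b2n ((j <=? d) && (j <=? s))).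
Definition truncated_cost J := vertex_sum (fun d s => Nat.min J (Nat.min d s)).

Lemma truncated_cost_le_cost J t : truncated_cost J 0 t <= min_depth_size_sum t.
Proof.
  unfold truncated_cost, min_depth_size_sum. rewrite cost_from_vertex_sum.
  apply vertex_sum_le. lia.
Qed.

Lemma truncated_cost_S J d t :
  truncated_cost (S J) d t = truncated_cost J d t + deep_heavy_count (S J) d t.
Proof.
  unfold truncated_cost, deep_heavy_count. rewrite <- vertex_sum_add.
  apply vertex_sum_ext. intros d' s.
  destruct (Nat.leb_spec (S J) d'), (Nat.leb_spec (S J) s); simpl Nat.b2n; lia.
Qed.

Lemma heavy_count_le j d t :
  heavy_count j d t <= deep_heavy_count j d t + shallow_count j d t.
Proof.
  unfold heavy_count, deep_heavy_count, shallow_count. rewrite <- vertex_sum_add.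
  apply vertex_sum_le. intros d' s.
  destruct (Nat.leb_spec j d'), (Nat.leb_spec j s), (Nat.ltb_spec d' j); simpl; lia.
Qed.

Lemma size_le_heavy_count m j d t : 1 <= j -> all_children_le m t ->
  tsize t <= (j - 1) + (1 + m * (j - 1)) * heavy_count j d t.
Proof.
  intros Hj. revert d. induction t as [ts IH] using rtree_nested_ind. intros d Ht.
  apply all_children_le_Node in Ht as [Hlen Hc].
  unfold heavy_count. rewrite vertex_sum_Node. fold (heavy_count j).
  destruct (Nat.leb_spec j (tsize (Node ts))); simpl Nat.b2n; [|nia].
  assert (Hsum := list_sum_map_le_affine tsize (heavy_count j (S d)) (j - 1) (1 + m * (j - 1)) ts
                    (fun c Hin => IH c Hin (S d) (Hc c Hin))).
  assert (length ts * (j - 1) <= m * (j - 1)) by (apply Nat.mul_le_mono_r; lia).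
  rewrite tsize_Node. nia.
Qed.

Lemma size_le_root_heavy_count m j t : 1 <= m -> 1 <= j -> max_deg_le (S m) t ->
  tsize t <= S m * j + m * j * heavy_count j 0 t.
Proof.
  intros Hm Hj. destruct t as [ts]. intros [Hlen Hc]. simpl in Hlen.
  rewrite Forall_forall in Hc. replace (S m - 1) with m in Hc by lia.
  unfold heavy_count. rewrite vertex_sum_Node. fold (heavy_count j).
  assert (Hsum := list_sum_map_le_affine tsize (heavy_count j 1) (j - 1) (1 + m * (j - 1)) ts
                    (fun c Hin => size_le_heavy_count m j 1 c Hj (Hc c Hin))).
  assert (length ts * (j - 1) <= S m * (j - 1)) by (apply Nat.mul_le_mono_r; lia).
  assert (1 + m * (j - 1) <= m * j) by nia.
  rewrite tsize_Node. nia.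
Qed.

Lemma shallow_count_lt K j d t : 1 <= K -> all_children_le K t ->
  shallow_count j d t < S K ^ (j - d).
Proof.
  intros HK. revert d. induction t as [ts IH] using rtree_nested_ind. intros d Ht.
  apply all_children_le_Node in Ht as [Hlen Hc].
  unfold shallow_count. rewrite vertex_sum_Node. fold (shallow_count j).
  set (P := S K ^ (j - S d)).
  assert (Hsum : list_sum (map (shallow_count j (S d)) ts) <= length ts * (P - 1)).
  { apply list_sum_map_le_const.
    intros c Hin. specialize (IH c Hin (S d) (Hc c Hin)). fold P in IH. lia. }
  destruct (Nat.ltb_spec d j); simpl Nat.b2n.
  - replace (j - d) with (S (j - S d)) by lia. rewrite Nat.pow_succ_r'. fold P.
    assert (1 <= P) by (apply Nat.neq_0_lt_0, Nat.pow_nonzero; lia).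
    assert (length ts * (P - 1) <= K * (P - 1)) by (apply Nat.mul_le_mono_r; lia).
    nia.
  - assert (P = 1) by (unfold P; replace (j - S d) with 0 by lia; reflexivity).
    replace (j - d) with 0 by lia. simpl. nia.
Qed.

Open Scope R_scope.

Fixpoint harmonic (J : nat) : R :=
  match J with O => 0 | S J' => harmonic J' + / INR (S J') end.

Lemma deep_heavy_count_lower_bound m j T :
  (1 <= m)%nat -> (1 <= j)%nat -> max_deg_le (S m) T ->
  INR (tsize T) / INR m * / INR j - 2 - INR (S (S m)) ^ j <= INR (deep_heavy_count j 0 T).
Proof.
  intros Hm Hj HT.
  assert (Hheavy := heavy_count_le j 0 T).
  assert (Hshallow := shallow_count_lt (S m) j 0 T ltac:(lia)
                        (max_deg_le_all_children_le _ _ HT)).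
  assert (Hsize := size_le_root_heavy_count m j T Hm Hj HT).
  rewrite Nat.sub_0_r in Hshallow.
  apply le_INR in Hheavy, Hsize. apply lt_INR in Hshallow.
  rewrite plus_INR in Hheavy. rewrite pow_INR in Hshallow. rewrite plus_INR, !mult_INR in Hsize.
  set (H := INR (heavy_count j 0 T)) in *.
  assert (HmR : 1 <= INR m) by (apply (le_INR 1); lia).
  assert (HjR : 1 <= INR j) by (apply (le_INR 1); lia).
  set (q := INR (tsize T) / INR m * / INR j).
  assert (Hq : INR (tsize T) = q * (INR m * INR j)) by (unfold q; field; lra).
  rewrite S_INR in Hsize.
  assert (Hmj : 0 < INR m * INR j) by nra.
  assert (Hsize' : INR (tsize T) <= (INR m * INR j) * (2 + H)) by nra.
  assert (q <= 2 + H) by nra.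
  lra.
Qed.

Lemma truncated_cost_lower_bound m J T : (1 <= m)%nat -> max_deg_le (S m) T ->
  INR (tsize T) / INR m * harmonic J - 2 * INR J - INR (S (S m)) ^ S J
    <= INR (truncated_cost J 0 T).
Proof.
  intros Hm HT. induction J as [|J IHJ].
  - cbn [harmonic pow]. rewrite Rmult_0_r, Rmult_0_r, Rmult_1_r.
    pose proof (pos_INR (truncated_cost 0 0 T)). pose proof (pos_INR (S (S m))). lra.
  - rewrite truncated_cost_S, plus_INR.
    assert (Hdeep := deep_heavy_count_lower_bound m (S J) T Hm ltac:(lia) HT).
    assert (HB : 2 <= INR (S (S m))) by (apply (le_INR 2); lia).
    assert (Hpow : 0 <= INR (S (S m)) ^ S J) by (apply pow_le; lra).
    assert (2 * INR (S (S m)) ^ S J <= INR (S (S m)) ^ S (S J))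
      by (change (INR (S (S m)) ^ S (S J)) with (INR (S (S m)) * INR (S (S m)) ^ S J); nra).
    change (harmonic (S J)) with (harmonic J + / INR (S J)).
    rewrite Rmult_plus_distr_l. rewrite (S_INR J) in *. lra.
Qed.

Lemma ln_le_ln x y : 0 < x -> x <= y -> ln x <= ln y.
Proof.
  intros Hx [Hlt|<-]; [left; apply ln_increasing; assumption|right; reflexivity].
Qed.

Lemma ln_1_plus_le x : -1 < x -> ln (1 + x) <= x.
Proof.
  intros Hx. rewrite <- (ln_exp x) at 2. apply ln_le_ln; [lra|apply exp_ineq1_le].
Qed.

Lemma ln_gt_1_minus_inv x : 0 < x -> x <> 1 -> 1 - / x < ln x.
Proof.
  intros Hx Hx1. assert (Hexp := exp_ineq1 (- ln x)).
  rewrite exp_Ropp, exp_ln in Hexp by lra.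
  assert (ln x <> 0) by (rewrite <- ln_1; intros E; apply ln_inv in E; lra).
  lra.
Qed.

Lemma harmonic_ge_ln J : ln (INR (S J)) <= harmonic J.
Proof.
  induction J as [|J IHJ].
  - simpl. rewrite ln_1. lra.
  - cbn [harmonic]. set (x := INR (S J)) in *.
    assert (Hx : 0 < x) by (apply lt_0_INR; lia).
    assert (Hinv : 0 < / x) by (apply Rinv_0_lt_compat, Hx).
    replace (INR (S (S J))) with (x * (1 + / x)) by (rewrite (S_INR (S J)); fold x; field; lra).
    rewrite ln_mult by lra.
    assert (ln (1 + / x) <= / x) by (apply ln_1_plus_le; lra).
    lra.
Qed.

Lemma exists_pow_bracket b n : (2 <= b)%nat -> (b <= n)%nat ->
  exists J, (b ^ S J <= n < b ^ S (S J))%nat.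
Proof.
  intros Hb Hn.
  assert (Hk : forall k, (n < b ^ S k)%nat -> exists J, (b ^ S J <= n < b ^ S (S J))%nat).
  { induction k as [|k IHk]; intros Hlt.
    - simpl in Hlt. lia.
    - destruct (Nat.le_gt_cases (b ^ S k) n); [exists k; lia|auto]. }
  apply (Hk n). pose proof (Nat.pow_gt_lin_r b (S n) ltac:(lia)). lia.
Qed.

Lemma ln_ln_unbounded K : exists N, forall n, (N <= n)%nat -> K <= ln (ln (INR n)).
Proof.
  destruct (INR_unbounded (exp (exp K))) as [N HN].
  exists N. intros n Hn.
  assert (Hn' : exp (exp K) < INR n) by (apply le_INR in Hn; lra).
  assert (HlnK : exp K < ln (INR n)).
  { rewrite <- (ln_exp (exp K)). apply ln_increasing; [apply exp_pos|exact Hn']. }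
  rewrite <- (ln_exp K). left. apply ln_increasing; [apply exp_pos|exact HlnK].
Qed.

Lemma logb_logb b x : 1 < b -> 1 < x ->
  logb b (logb b x) = (ln (ln x) - ln (ln b)) / ln b.
Proof.
  intros Hb Hx.
  assert (0 < ln b) by (rewrite <- ln_1; apply ln_increasing; lra).
  assert (0 < ln x) by (rewrite <- ln_1; apply ln_increasing; lra).
  unfold logb, Rdiv at 2. rewrite ln_mult, ln_Rinv by auto using Rinv_0_lt_compat.
  reflexivity.
Qed.

Lemma min_depth_size_sum_ge_ln_ln m n T : (1 <= m)%nat -> (S (S m) <= n)%nat ->
  tsize T = n -> max_deg_le (S m) T ->
  INR n * (ln (ln (INR n)) / INR m - (ln (2 * ln (INR (S (S m)))) / INR m + 3))
    <= INR (min_depth_size_sum T).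
Proof.
  intros Hm Hn HTn HT.
  destruct (exists_pow_bracket (S (S m)) n ltac:(lia) Hn) as [J [HJlo HJhi]].
  assert (Htrunc := truncated_cost_lower_bound m J T Hm HT).
  assert (Hcost := le_INR _ _ (truncated_cost_le_cost J T)).
  assert (Hharm := harmonic_ge_ln J).
  rewrite HTn in Htrunc.
  set (B := INR (S (S m))) in *. set (N := INR n) in *.
  assert (HB : 2 <= B) by (apply (le_INR 2); lia).
  assert (HlnB : 0 < ln B) by (rewrite <- ln_1; apply ln_increasing; lra).
  assert (HmR : 0 < INR m) by (apply lt_0_INR; lia).
  assert (HBJ : B ^ S J <= N) by (unfold B, N; rewrite <- pow_INR; apply le_INR, HJlo).
  assert (HJN : INR J <= N).
  { apply le_INR. pose proof (Nat.pow_gt_lin_r (S (S m)) (S J) ltac:(lia)). lia. }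
  assert (HlnN : ln N < INR (S (S J)) * ln B).
  { rewrite <- ln_pow by lra. apply ln_increasing; [apply lt_0_INR; lia|].
    unfold N, B. rewrite <- pow_INR. apply lt_INR, HJhi. }
  assert (HN1 : 1 < N) by (apply (lt_INR 1); lia).
  assert (HJ1 : 0 < INR (S J)) by (apply lt_0_INR; lia).
  assert (Hlnln : ln (ln N) < ln (2 * ln B) + ln (INR (S J))).
  { rewrite <- ln_mult by lra.
    apply ln_increasing; [rewrite <- ln_1; apply ln_increasing; lra|].
    rewrite !S_INR in *. pose proof (pos_INR J). nra. }
  assert (HNm : 0 <= N / INR m).
  { unfold Rdiv. apply Rmult_le_pos; [apply pos_INR|left; apply Rinv_0_lt_compat, HmR]. }
  assert (N / INR m * (ln (ln N) - ln (2 * ln B)) <= N / INR m * harmonic J)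
    by (apply Rmult_le_compat_l; lra).
  replace (N * (ln (ln N) / INR m - (ln (2 * ln B) / INR m + 3)))
    with (N / INR m * (ln (ln N) - ln (2 * ln B)) - 3 * N) by (field; lra).
  lra.
Qed.

Lemma min_depth_size_sum_eventually_ge D : (3 <= D)%nat ->
  exists N0, forall n T, (N0 <= n)%nat -> tsize T = n -> max_deg_le D T ->
    INR (min_depth_size_sum T) >=
      (INR D - 2) / (INR D - 1) ^ 2 * INR n * logb (INR D - 1) (logb (INR D - 1) (INR n)).
Proof.
  intros HD. destruct D as [|m]; [lia|].
  replace (INR (S m) - 1) with (INR m) by (rewrite S_INR; ring).
  replace (INR (S m) - 2) with (INR m - 1) by (rewrite S_INR; ring).
  set (M := INR m).
  assert (HM : 2 <= M) by (apply (le_INR 2); lia).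
  assert (HlnM : 1 - / M < ln M) by (apply ln_gt_1_minus_inv; lra).
  assert (HlnM0 : 0 < ln M) by (rewrite <- ln_1; apply ln_increasing; lra).
  set (beta := (M - 1) / (M ^ 2 * ln M)).
  assert (Hgap : 0 < / M - beta).
  { unfold beta. replace (/ M - (M - 1) / (M ^ 2 * ln M))
      with (M * (ln M - (1 - / M)) / (M ^ 2 * ln M)) by (field; lra).
    apply Rdiv_lt_0_compat; [|apply Rmult_lt_0_compat; [apply pow_lt|]]; nra. }
  set (c := ln (2 * ln (INR (S (S m)))) / M + 3).
  destruct (ln_ln_unbounded ((c - beta * ln (ln M)) / (/ M - beta))) as [N HN].
  exists (Nat.max N (S (S m))). intros n T Hn HTn HT.
  assert (Hcost := min_depth_size_sum_ge_ln_ln m n T ltac:(lia) ltac:(lia) HTn HT).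
  assert (HLL := HN n ltac:(lia)). fold M c in Hcost.
  assert (Hn1 : 1 < INR n) by (apply (lt_INR 1); lia).
  rewrite logb_logb by lra.
  set (L := ln (ln (INR n))) in *.
  assert (Hslack : beta * (L - ln (ln M)) <= L / M - c).
  { set (g := / M - beta) in *.
    apply (Rmult_le_compat_l g) in HLL; [|lra].
    replace (g * ((c - beta * ln (ln M)) / g)) with (c - beta * ln (ln M)) in HLL
      by (field; lra).
    unfold g, Rdiv in *. lra. }
  replace ((M - 1) / M ^ 2 * INR n * ((L - ln (ln M)) / ln M))
    with (INR n * (beta * (L - ln (ln M)))) by (unfold beta; field; lra).
  apply Rle_ge. eapply Rle_trans; [|exact Hcost].
  apply Rmult_le_compat_l; [apply pos_INR|exact Hslack].
Qed.

Theorem lemma4 (D : nat) (HD : (3 <= D)%nat) :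
  exists eps : nat -> R,
    Un_cv eps 0 /\
    forall (n : nat) (T : rtree),
      (2 <= n)%nat ->
      tsize T = n ->
      max_deg_le D T ->
      INR (min_depth_size_sum T) >=
        (1 - eps n) * ((INR D - 2) / (INR D - 1) ^ 2) * INR n
          * logb (INR D - 1) (logb (INR D - 1) (INR n)).
Proof.
  destruct (min_depth_size_sum_eventually_ge D HD) as [N0 HN0].
  exists (fun n => if (n <? N0)%nat then 1 else 0). split.
  - intros e He. exists N0. intros n Hn. destruct (Nat.ltb_spec n N0); [lia|].
    unfold R_dist. rewrite Rminus_0_r, Rabs_R0. exact He.
  - intros n T Hn HTn HT. destruct (Nat.ltb_spec n N0).
    + rewrite Rminus_diag, !Rmult_0_l. apply Rle_ge, pos_INR.
    + rewrite Rminus_0_r, Rmult_1_l. exact (HN0 n T ltac:(assumption) HTn HT).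
Qed.
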